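(* Let $\pi$ be a skew-merged permutation with no central elements and $\tau$ a skew-merged permutation. If $e_1$ and $e_2$ are embeddings of $\pi$ into $\tau$, then the map $e_1\wedge e_2$ defined by $(e_1\wedge e_2)(x)=\mathit{outer}\{e_1(x),e_2(x)\}$ for all points $x$ of $\pi$ is also an embedding of $\pi$ into $\tau$.
   Context: Permutations are identified with their sets of points $(i,\sigma(i))$; an embedding is an injective map between point sets preserving relative horizontal and vertical order of every pair. A permutation is skew-merged if its points can be partitioned into an increasing and a decreasing subsequence. An element is of type NE if it plays the $3$ in an occurrence of $213$, NW if it plays the $3$ in an occurrence of $312$, SW if it plays the $1$ in an occurrence of $132$, SE if it plays the $1$ in an occurrence of $231$, and central otherwise; the four non-central types are pairwise disjoint, SW and NE elements form increasing sequences, NW and SE elements form decreasing sequences, and embeddings between skew-merged permutations preserve the type of non-central elements. For two non-central elements $x,y$ of the same type, $x\lhd y$ means $x$ lies strictly further out from the centre than $y$: for type SW, $x$ is left of and below $y$; for NE, $x$ is right of and above $y$; for NW, $x$ is left of and above $y$; for SE, $x$ is right of and below $y$. $\mathit{outer}$ of two elements of the same type is the $\lhd$-minimum (the one further out), or the common element if equal. *)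

(* A permutation of size n is s : {perm 'I_n}; its points are
   (i, s i) for i : 'I_n, and we identify the point (i, s i) with its index i. *)
From mathcomp Require Import all_boot all_order all_fingroup.
Set Implicit Arguments. Unset Strict Implicit. Unset Printing Implicit Defensive.

Section Defs.
Variable n : nat.
Implicit Types (s : {perm 'I_n}) (x y : 'I_n).

Definition skew_merged s : bool :=
  [exists A : {set 'I_n},
     [forall i : 'I_n, forall j : 'I_n, ((i \in A) && (j \in A) && (i < j)) ==> (s i < s j)] &&
     [forall i : 'I_n, forall j : 'I_n, ((i \notin A) && (j \notin A) && (i < j)) ==> (s j < s i)]].

Definition is_NE s x : bool :=
  [exists a : 'I_n, exists b : 'I_n, [&& a < b, b < x, s b < s a & s a < s x]].
Definition is_NW s x : bool :=
  [exists b : 'I_n, exists c : 'I_n, [&& x < b, b < c, s b < s c & s c < s x]].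
Definition is_SW s x : bool :=
  [exists b : 'I_n, exists c : 'I_n, [&& x < b, b < c, s x < s c & s c < s b]].
Definition is_SE s x : bool :=
  [exists a : 'I_n, exists b : 'I_n, [&& a < b, b < x, s x < s a & s a < s b]].

Definition central s x : bool :=
  ~~ [|| is_NE s x, is_NW s x, is_SW s x | is_SE s x].

Definition lhd s x y : bool :=
  [|| [&& is_SW s x, is_SW s y, x < y & s x < s y],
      [&& is_NE s x, is_NE s y, y < x & s y < s x],
      [&& is_NW s x, is_NW s y, x < y & s y < s x]
    | [&& is_SE s x, is_SE s y, y < x & s x < s y]].

Definition outer s x y : 'I_n := if lhd s x y then x else y.
End Defs.

Definition embedding n m (p : {perm 'I_n}) (t : {perm 'I_m}) (e : 'I_n -> 'I_m) : Prop :=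
  injective e /\
  forall i j : 'I_n, (i < j) = (e i < e j) /\ (p i < p j) = (t (e i) < t (e j)).

From mathcomp Require Import all_boot all_order all_fingroup.
From mathcomp Require Import zify.
Set Implicit Arguments. Unset Strict Implicit. Unset Printing Implicit Defensive.

(* Split the skew-merged permutation t into an increasing line A and a
   decreasing line.  NE and SW elements lie on A, NW and SE elements on the
   other line, and each has a witness on the other line lying towards the
   centre.  Comparing witnesses shows that every element of a western type
   (NW, SW) lies left of every element of an eastern type (NE, SE), and every
   southern element below every northern one; and among elements of a single
   type, outer is the coordinatewise maximum or minimum, according to the
   type's direction.  So for x < y in p the outer images of x and y are either
   separated by their types or compared through max/min of two strictly
   ordered pairs; the vertical order is handled in the same way. *)

(* A type is encoded as the pair (lies east?, lies north?): NE = (true, true),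
   NW = (false, true), SW = (false, false), SE = (true, false). *)
Definition has_type k (s : {perm 'I_k}) (T : bool * bool) (x : 'I_k) : bool :=
  match T with
  | (true, true) => is_NE s x
  | (false, true) => is_NW s x
  | (false, false) => is_SW s x
  | (true, false) => is_SE s x
  end.

Lemma not_central_type k (s : {perm 'I_k}) x :
  ~~ central s x -> exists T, has_type s T x.
Proof.
rewrite negbK => /or4P [] h;
  [exists (true, true) | exists (false, true) | exists (false, false) | exists (true, false)].
all: exact: h.
Qed.

Lemma lhdE k (s : {perm 'I_k}) x y :
  lhd s x y = [exists T, [&& has_type s T x, has_type s T y,
                            if T.1 then y < x else x < y
                          & if T.2 then s y < s x else s x < s y]].
Proof.
apply/idP/existsP => [/or4P [] h | [[[] []] h]].
- by exists (false, false).
- by exists (true, true).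
- by exists (false, true).
- by exists (true, false).
all: by rewrite /lhd h ?orbT.
Qed.

Lemma outer_type k (s : {perm 'I_k}) T u v :
  has_type s T u -> has_type s T v -> has_type s T (outer s u v).
Proof. by rewrite /outer; case: ifP. Qed.

Lemma embedding_type n m (p : {perm 'I_n}) (t : {perm 'I_m}) e T x :
  embedding p t e -> has_type p T x -> has_type t T (e x).
Proof.
case=> _ He.
have Eh i j : (e i < e j) = (i < j) by rewrite (He i j).1.
have Ev i j : (t (e i) < t (e j)) = (p i < p j) by rewrite (He i j).2.
case: T => [[] []] /existsP [a /existsP [b h]]; apply/existsP; exists (e a).
all: by apply/existsP; exists (e b); rewrite !Eh !Ev.
Qed.

Lemma lt_homo_mono (I : Type) (a b : I -> nat) :
  injective a -> (forall i j, a i < a j -> b i < b j) ->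
  forall i j, (b i < b j) = (a i < a j).
Proof.
move=> inj_a hom i j; case: (ltngtP (a i) (a j)) => [/hom // | /hom ba | /inj_a ->].
- by apply/negbTE; rewrite -leqNgt ltnW.
- exact: ltnn.
Qed.

Lemma embedding_of_lt n m (p : {perm 'I_n}) (t : {perm 'I_m}) (f : 'I_n -> 'I_m) :
  (forall i j : 'I_n, i < j -> f i < f j) ->
  (forall i j : 'I_n, p i < p j -> t (f i) < t (f j)) ->
  embedding p t f.
Proof.
move=> homx homy.
have monox := lt_homo_mono val_inj homx.
have monoy := lt_homo_mono (inj_comp val_inj (@perm_inj _ p)) homy.
split=> [i j fij | i j]; last by rewrite monox monoy.
apply: val_inj; case: (ltngtP i j) => // ij; have := ij; by rewrite -monox fij ltnn.
Qed.

Lemma skew_merged_partition m (t : {perm 'I_m}) : skew_merged t ->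
  exists A : {set 'I_m},
    (forall i j, i \in A -> j \in A -> i < j -> t i < t j) /\
    (forall i j, i \notin A -> j \notin A -> i < j -> t j < t i).
Proof.
case/existsP => A /andP [/forallP incA /forallP decA]; exists A.
split=> i j hi hj hij.
- by move/forallP/(_ j)/implyP: (incA i); apply; rewrite hi hj hij.
- by move/forallP/(_ j)/implyP: (decA i); apply; rewrite hi hj hij.
Qed.

Section SkewMerged.
Variables (m : nat) (t : {perm 'I_m}) (A : {set 'I_m}).
Hypothesis incA : forall i j, i \in A -> j \in A -> i < j -> t i < t j.
Hypothesis decA : forall i j, i \notin A -> j \notin A -> i < j -> t j < t i.

(* Instantiate the monotonicity of t on A and on its complement at every pair
   of points whose side is known; what remains is linear arithmetic. *)
Ltac side_orders :=
  repeat match goal with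
  | Hi : is_true (in_mem ?i ?B), Hj : is_true (in_mem ?j ?B) |- _ =>
      lazymatch goal with
      | _ : is_true (nat_of_ord i < nat_of_ord j) -> _ |- _ => fail
      | _ => move: (@incA i j Hi Hj) => ?
      end
  | Hi : is_true (~~ in_mem ?i ?B), Hj : is_true (~~ in_mem ?j ?B) |- _ =>
      lazymatch goal with
      | _ : is_true (nat_of_ord i < nat_of_ord j) -> _ |- _ => fail
      | _ => move: (@decA i j Hi Hj) => ?
      end
  end.

Lemma type_witness T x : has_type t T x ->
  exists w, [/\ if T.1 == T.2 then (x \in A) && (w \notin A) else (x \notin A) && (w \in A),
               if T.1 then w < x else x < w
             & if T.2 then t w < t x else t x < t w].
Proof.
case: T => [[] []] /existsP [a /existsP [b /and4P [h1 h2 h3 h4]]] /=.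
all: case: (boolP (x \in A)) => hx; case: (boolP (a \in A)) => ha;
  case: (boolP (b \in A)) => hb; side_orders; try (exfalso; lia).
all: first [ by exists a; rewrite ?hx ?ha; split; lia
           | by exists b; rewrite ?hx ?hb; split; lia ].
Qed.

Lemma west_lt_east T1 T2 u v :
  has_type t T1 u -> has_type t T2 v -> ~~ T1.1 -> T2.1 -> u < v.
Proof.
move: T1 T2 => [[] n1] [[] n2] tu tv //= _ _.
case: (ltngtP u v) => // [vu | /val_inj uv]; last subst v.
all: move: tu tv => /type_witness [wu [mu hu vu']] /type_witness [wv [mv hv vv]].
all: by case: n1 n2 mu hu vu' mv hv vv => [] [] /= /andP [? ?] ? ? /andP [? ?] ? ?;
  side_orders; lia.
Qed.

Lemma south_lt_north T1 T2 u v :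
  has_type t T1 u -> has_type t T2 v -> ~~ T1.2 -> T2.2 -> t u < t v.
Proof.
move: T1 T2 => [e1 []] [e2 []] tu tv //= _ _.
case: (ltngtP (t u) (t v)) => // [vu | /val_inj/perm_inj uv]; last subst v.
all: move: tu tv => /type_witness [wu [mu hu vu']] /type_witness [wv [mv hv vv]].
all: by case: e1 e2 mu hu vu' mv hv vv => [] [] /= /andP [? ?] ? ? /andP [? ?] ? ?;
  side_orders; lia.
Qed.

Lemma has_type_inj T1 T2 x : has_type t T1 x -> has_type t T2 x -> T1 = T2.
Proof.
move=> h1 h2; case: T1 T2 h1 h2 => [e1 n1] [e2 n2] h1 h2; congr pair.
- case: e1 e2 h1 h2 => [] [] h1 h2 //.
  + by have := west_lt_east h2 h1 isT isT; rewrite ltnn.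
  + by have := west_lt_east h1 h2 isT isT; rewrite ltnn.
- case: n1 n2 h1 h2 => [] [] h1 h2 //.
  + by have := south_lt_north h2 h1 isT isT; rewrite ltnn.
  + by have := south_lt_north h1 h2 isT isT; rewrite ltnn.
Qed.

Lemma type_mem T x : has_type t T x -> (x \in A) = (T.1 == T.2).
Proof.
by case/type_witness=> w [+ _ _]; case: (_ == _) => /andP [hx _]; [exact: hx | exact: negbTE].
Qed.

Lemma in_side_order u v : u \in A -> v \in A -> (u < v) = (t u < t v).
Proof.
move=> hu hv; case: (ltngtP u v) => [uv | vu | /val_inj ->].
- by rewrite incA.
- by rewrite ltnNge ltnW // incA.
- by rewrite ltnn.
Qed.

Lemma out_side_order u v : u \notin A -> v \notin A -> (u < v) = (t v < t u).
Proof.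
move=> hu hv; case: (ltngtP u v) => [uv | vu | /val_inj ->].
- by rewrite decA.
- by rewrite ltnNge ltnW // decA.
- by rewrite ltnn.
Qed.

Lemma type_order T u v : has_type t T u -> has_type t T v ->
  (u < v) = (if T.1 == T.2 then t u < t v else t v < t u).
Proof.
move=> /type_mem hu /type_mem hv; case: (_ == _) in hu hv *.
- exact: in_side_order.
- exact: out_side_order (negbT hu) (negbT hv).
Qed.

Lemma lhd_type T u v : has_type t T u -> has_type t T v ->
  lhd t u v = (if T.1 then v < u else u < v).
Proof.
move=> hu hv; rewrite lhdE; apply/existsP/idP => [[T' /and4P [hu' _ h _]] | h].
  by rewrite (has_type_inj hu hu').
exists T; rewrite hu hv h /=.
by move: h; rewrite (type_order hu hv) (type_order hv hu); case: (T.1); case: (T.2).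
Qed.

Lemma outer_east T u v : has_type t T u -> has_type t T v ->
  outer t u v = (if T.1 then maxn u v else minn u v) :> nat.
Proof. by move=> hu hv; rewrite /outer (lhd_type hu hv); case: (T.1); case: ltnP; lia. Qed.

Lemma outer_north T u v : has_type t T u -> has_type t T v ->
  t (outer t u v) = (if T.2 then maxn (t u) (t v) else minn (t u) (t v)) :> nat.
Proof.
move=> hu hv; rewrite /outer (lhd_type hu hv) (type_order hu hv) (type_order hv hu).
by case: (T.1); case: (T.2) => /=; case: ltnP; lia.
Qed.

Lemma outer_lt_east T1 T2 u1 u2 v1 v2 :
  has_type t T1 u1 -> has_type t T1 u2 -> has_type t T2 v1 -> has_type t T2 v2 ->
  u1 < v1 -> u2 < v2 -> outer t u1 u2 < outer t v1 v2.
Proof.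
move=> hu1 hu2 hv1 hv2 lt1 lt2.
case: (boolP T1.1) => e1; case: (boolP T2.1) => e2.
- by rewrite (outer_east hu1 hu2) (outer_east hv1 hv2) e1 e2; lia.
- by have := west_lt_east hv1 hu1 e2 e1; lia.
- exact: west_lt_east (outer_type hu1 hu2) (outer_type hv1 hv2) e1 e2.
- by rewrite (outer_east hu1 hu2) (outer_east hv1 hv2) (negbTE e1) (negbTE e2); lia.
Qed.

Lemma outer_lt_north T1 T2 u1 u2 v1 v2 :
  has_type t T1 u1 -> has_type t T1 u2 -> has_type t T2 v1 -> has_type t T2 v2 ->
  t u1 < t v1 -> t u2 < t v2 -> t (outer t u1 u2) < t (outer t v1 v2).
Proof.
move=> hu1 hu2 hv1 hv2 lt1 lt2.
case: (boolP T1.2) => n1; case: (boolP T2.2) => n2.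
- by rewrite (outer_north hu1 hu2) (outer_north hv1 hv2) n1 n2; lia.
- by have := south_lt_north hv1 hu1 n2 n1; lia.
- exact: south_lt_north (outer_type hu1 hu2) (outer_type hv1 hv2) n1 n2.
- by rewrite (outer_north hu1 hu2) (outer_north hv1 hv2) (negbTE n1) (negbTE n2); lia.
Qed.
End SkewMerged.

Theorem lemma3 (n m : nat) (p : {perm 'I_n}) (t : {perm 'I_m}) :
  skew_merged p -> (forall x : 'I_n, ~~ central p x) -> skew_merged t ->
  forall e1 e2 : 'I_n -> 'I_m,
    embedding p t e1 -> embedding p t e2 ->
    embedding p t (fun x => outer t (e1 x) (e2 x)).
Proof.
move=> _ noncentral /skew_merged_partition [A [incA decA]] e1 e2 E1 E2.
apply: embedding_of_lt => i j lt_ij.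
all: have [Ti /[dup] /(embedding_type E1) h1i /(embedding_type E2) h2i] :=
  not_central_type (noncentral i).
all: have [Tj /[dup] /(embedding_type E1) h1j /(embedding_type E2) h2j] :=
  not_central_type (noncentral j).
- apply: (outer_lt_east incA decA h1i h2i h1j h2j).
  + by rewrite -(E1.2 i j).1.
  + by rewrite -(E2.2 i j).1.
- apply: (outer_lt_north incA decA h1i h2i h1j h2j).
  + by rewrite -(E1.2 i j).2.
  + by rewrite -(E2.2 i j).2.
Qed.
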